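(* Let $n\geq 2$ and $m\geq 1$ be integers, let $K$ be an algebraically closed field, and let $p(x_1,\ldots,x_m)\in K\langle x_1,\ldots,x_m\rangle$ be a polynomial with zero constant term in non-commuting variables. Set $r=\mathrm{ord}(p)$ and suppose that $1<r<n-1$. Then $p(T_n(K))=\{p(u_1,\ldots,u_m): u_1,\ldots,u_m\in T_n(K)\}$ is a dense subset of $T_n(K)^{(r-1)}$ with respect to the Zariski topology.
   Context: $T_n(K)$ denotes the algebra of $n\times n$ upper triangular matrices over $K$. For an integer $t\geq 0$, $T_n(K)^{(t)}$ denotes the set of upper triangular matrices whose $(i,j)$ entries are zero whenever $j-i\leq t$; it is identified with the affine space $K^d$, $d=\frac{(n-r)(n-r+1)}{2}$ when $t=r-1$, via the entries $(i,j)$ with $j-i\geq t+1$, and carries the Zariski topology of that affine space (closed sets are common zero sets of families of commutative polynomials in these coordinates). For a $K$-algebra $\mathcal{A}$ let $\mathcal{T}(\mathcal{A})$ be the set of polynomial identities of $\mathcal{A}$; one has $\mathcal{T}(K)\supset\mathcal{T}(T_2(K))\supset\mathcal{T}(T_3(K))\supset\cdots$, with $T_1(K)=K$. The order $\mathrm{ord}(p)$ of $p$ is the least integer $k\geq 1$ such that $p\in\mathcal{T}(T_k(K))$ but $p\notin\mathcal{T}(T_{k+1}(K))$, and $\mathrm{ord}(p)=0$ if $p\notin\mathcal{T}(K)$. *)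

From HB Require Import structures.
From mathcomp Require Import all_boot all_order all_algebra.
From mathcomp Require Import mpoly.
Set Implicit Arguments. Unset Strict Implicit. Unset Printing Implicit Defensive.
Import GRing.Theory.
Local Open Scope ring_scope.

(* A polynomial in the free algebra K<x_1,...,x_m> (non-commuting variables,
   indexed by 'I_m), presented as a finite K-linear combination of words:
   the list [:: (c_1, w_1); ...; (c_k, w_k)] stands for \sum c_l w_l,
   where a word w is a sequence of variable indices. *)
Definition ncpoly (K : fieldType) (m : nat) := seq (K * seq 'I_m).

Definition nc_const_coef (K : fieldType) (m : nat) (p : ncpoly K m) : K :=
  \sum_(t <- p | t.2 == [::]) t.1.

Definition word_eval (K : fieldType) (m n : nat) (u : 'I_m -> 'M[K]_n)
  (w : seq 'I_m) : 'M[K]_n := foldr (fun i M => u i *m M) 1%:M w.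

Definition nc_eval (K : fieldType) (m n : nat) (p : ncpoly K m)
  (u : 'I_m -> 'M[K]_n) : 'M[K]_n :=
  \sum_(t <- p) t.1 *: word_eval u t.2.

Definition upper_tri (K : fieldType) (n : nat) (A : 'M[K]_n) : Prop :=
  forall i j : 'I_n, (j < i)%N -> A i j = 0.

(* T_n(K)^{(t)}: upper triangular, with A i j = 0 whenever j - i <= t
   (for j < i the integer j - i is negative, so the truncated nat test is
   also correct there). *)
Definition Tn_t (K : fieldType) (n t : nat) (A : 'M[K]_n) : Prop :=
  upper_tri A /\ forall i j : 'I_n, (j - i <= t)%N -> A i j = 0.

Definition is_PI_T (K : fieldType) (m : nat) (p : ncpoly K m) (k : nat) : Prop :=
  forall u : 'I_m -> 'M[K]_k, (forall i, upper_tri (u i)) -> nc_eval p u = 0.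

Definition nc_ord_is (K : fieldType) (m : nat) (p : ncpoly K m) (r : nat) : Prop :=
  (r = 0%N /\ ~ is_PI_T p 1)
  \/ [/\ (1 <= r)%N, is_PI_T p r, ~ is_PI_T p r.+1 &
        forall k, (1 <= k < r)%N -> ~ (is_PI_T p k /\ ~ is_PI_T p k.+1)].

(* Coordinates (i,j) with j - i >= t+1, identifying T_n(K)^{(t)} with K^d. *)
Definition coordset (n t : nat) : {set 'I_n * 'I_n} :=
  [set ij : 'I_n * 'I_n | (t.+1 <= nat_of_ord ij.2 - nat_of_ord ij.1)%N].

Definition coords (K : fieldType) (n t : nat) (A : 'M[K]_n) :
  'I_#|coordset n t| -> K :=
  fun k => A (enum_val k).1 (enum_val k).2.

From HB Require Import structures.
From mathcomp Require Import all_boot all_order all_algebra.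
From mathcomp Require Import mpoly.
From mathcomp Require Import zify.
From Stdlib Require Import Classical.
Import GRing.Theory.
Local Open Scope ring_scope.
Set Implicit Arguments. Unset Strict Implicit. Unset Printing Implicit Defensive.

(* Write r = t.+1.  An entry (a, b) of p(u) with b - a <= t is an entry of p
   evaluated at the diagonal blocks of the u_k of size b - a + 1 <= r, and p is
   an identity of these smaller triangular algebras; so p(T_n) lies in
   T_n^(t).  Since p is not an identity of T_(r+1), some u has all entries of
   the r-th superdiagonal of p(u) nonzero: starting from a witness in T_(r+1),
   move along lines, on which each entry of p is a polynomial in the
   parameter.  A matrix M of T_n^(t) with nonzero r-th superdiagonal is
   conjugate, by an invertible upper triangular matrix built from the powers
   of M, to the r-shift matrix; as p commutes with conjugation, all such M lie
   in p(T_n).  They form the complement of finitely many coordinate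
   hyperplanes of T_n^(t), which is Zariski dense. *)

Section UpperTriangular.
Variables (K : fieldType) (n : nat).
Implicit Types A B : 'M[K]_n.

Lemma upper_tri0 : upper_tri (0 : 'M[K]_n).
Proof. by move=> i j _; rewrite mxE. Qed.

Lemma upper_tri_scalar (c : K) : upper_tri (c%:M : 'M[K]_n).
Proof.
by move=> i j lt_ji; rewrite mxE; case: eqP lt_ji => [->|_ _]; rewrite ?ltnn ?mulr0n.
Qed.

Lemma upper_triD A B : upper_tri A -> upper_tri B -> upper_tri (A + B).
Proof. by move=> hA hB i j lt_ji; rewrite mxE hA ?hB ?addr0. Qed.

Lemma upper_triZ (c : K) A : upper_tri A -> upper_tri (c *: A).
Proof. by move=> hA i j lt_ji; rewrite mxE hA ?mulr0. Qed.

Lemma upper_triM A B : upper_tri A -> upper_tri B -> upper_tri (A *m B).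
Proof.
move=> hA hB i j lt_ji; rewrite mxE big1 // => k _.
have [lt_ki|le_ik] := ltnP k i; first by rewrite hA ?mul0r.
by rewrite hB ?mulr0 // (leq_trans lt_ji le_ik).
Qed.

Lemma upper_tri_word_eval m (u : 'I_m -> 'M[K]_n) w :
  (forall k, upper_tri (u k)) -> upper_tri (word_eval u w).
Proof.
by move=> hu; elim: w => [|k w IHw] /=; [exact: upper_tri_scalar | exact: upper_triM].
Qed.

Lemma upper_tri_nc_eval m (p : ncpoly K m) (u : 'I_m -> 'M[K]_n) :
  (forall k, upper_tri (u k)) -> upper_tri (nc_eval p u).
Proof.
move=> hu; apply: big_ind => [|A B|t _]; first exact: upper_tri0.
  exact: upper_triD.
exact/upper_triZ/upper_tri_word_eval.
Qed.

End UpperTriangular.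

Lemma upper_tri_horner_mx (K : fieldType) n (g : 'M[K]_n.+1) (q : {poly K}) :
  upper_tri g -> upper_tri (horner_mx g q).
Proof.
move=> hg; elim/poly_ind: q => [|q c IHq]; first by rewrite rmorph0; exact: upper_tri0.
rewrite rmorphD rmorphM /= horner_mx_X horner_mx_C -mulmxE.
by apply: upper_triD; [exact: upper_triM | exact: upper_tri_scalar].
Qed.

(* Cayley-Hamilton, with the characteristic polynomial written chi(0) + Q * 'X. *)
Lemma invr_horner_mx (K : fieldType) n (g : 'M[K]_n.+1) :
  g \is a GRing.unit -> exists q : {poly K}, g^-1 = horner_mx g q.
Proof.
move=> g_unit; set P := char_poly g.
have P0_neq0 : P`_0 != 0.
  by rewrite char_poly_det mulf_neq0 ?signr_eq0 // -unitfE -unitmxE.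
have P_split : P = (P`_0)%:P + drop_poly 1 P * 'X.
  rewrite -[LHS](poly_take_drop 1) expr1; congr (_ + _).
  by apply/polyP => i; rewrite coef_take_poly coefC; case: i.
exists (- (P`_0)^-1 *: drop_poly 1 P); apply: (mulIr g_unit).
have := Cayley_Hamilton g; rewrite -/P [in LHS]P_split.
rewrite rmorphD rmorphM /= horner_mx_C horner_mx_X => /eqP.
rewrite addrC addr_eq0 => /eqP QgE.
rewrite mulVr // linearZ /= -scalerAl QgE scalerN scaleNr opprK.
by rewrite -scalemx1 scalerA mulVf ?scale1r.
Qed.

(* No invertibility hypothesis: a singular g is its own (junk) inverse. *)
Lemma upper_tri_inv (K : fieldType) n (g : 'M[K]_n.+1) : upper_tri g -> upper_tri g^-1.
Proof.
move=> hg; have [g_unit|/invr_out->//] := boolP (g \is a GRing.unit).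
by have [q ->] := invr_horner_mx g_unit; exact: upper_tri_horner_mx.
Qed.

Lemma eq_word_eval (K : fieldType) m n (u v : 'I_m -> 'M[K]_n) w :
  u =1 v -> word_eval u w = word_eval v w.
Proof. by move=> eq_uv; elim: w => //= k w ->; rewrite eq_uv. Qed.

Lemma eq_nc_eval (K : fieldType) m n (p : ncpoly K m) (u v : 'I_m -> 'M[K]_n) :
  u =1 v -> nc_eval p u = nc_eval p v.
Proof. by move=> eq_uv; apply: eq_bigr => t _; rewrite (eq_word_eval _ eq_uv). Qed.

Lemma nc_eval_conj (K : fieldType) m n (p : ncpoly K m) (h : 'M[K]_n.+1)
    (u : 'I_m -> 'M[K]_n.+1) : h \is a GRing.unit ->
  nc_eval p (fun k => h * u k * h^-1) = h * nc_eval p u * h^-1.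
Proof.
move=> h_unit.
have word_conj w : word_eval (fun k => h * u k * h^-1) w = h * word_eval u w * h^-1.
  elim: w => [|k w /= ->]; first by rewrite /= mulr1 mulrV.
  by rewrite !mulmxE !mulrA mulrVK.
rewrite /nc_eval mulr_sumr mulr_suml; apply: eq_bigr => t _.
by rewrite word_conj scalerAl scalerAr.
Qed.

Section DiagonalBlocks.
Variables (K : fieldType) (n s i : nat) (H : (i + s <= n)%N).

Definition block_ord (a : 'I_s) : 'I_n := widen_ord H (rshift i a).

Lemma block_ord_inj : injective block_ord.
Proof. by move=> a b /(congr1 val) /addnI /val_inj. Qed.

Definition diag_block (A : 'M[K]_n) : 'M[K]_s :=
  \matrix_(a, b) A (block_ord a) (block_ord b).

(* For upper triangular A and B, the terms of (A *m B) (i + a) (i + b) with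
   summation index outside the block vanish. *)
Lemma diag_blockM (A B : 'M[K]_n) : upper_tri A -> upper_tri B ->
  diag_block (A *m B) = diag_block A *m diag_block B.
Proof.
move=> hA hB; apply/matrixP => a b; rewrite !mxE.
rewrite (bigID (fun k : 'I_n => (i <= k < i + s)%N)) /=.
rewrite [X in _ + X]big1 ?addr0; last first.
  move=> k /negbTE; have [lt_ki _|le_ik /= /negbT] := ltnP k i.
    by rewrite hA ?mul0r // (leq_trans lt_ki) // leq_addr.
  by rewrite -leqNgt => le_k; rewrite hB ?mulr0 //= (leq_trans _ le_k) // ltn_add2l.
rewrite (reindex_onto block_ord (fun k : 'I_n => insubd a (k - i)%N)) /=; last first.
  move=> k /andP[le_ik lt_k]; apply/val_inj => /=.
  by rewrite val_insubd ltn_subLR // lt_k subnKC.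
apply: eq_big => [c|c _]; last by rewrite !mxE.
rewrite leq_addr /= ltn_add2l ltn_ord /=; apply/eqP/val_inj => /=.
by rewrite addKn val_insubd ltn_ord.
Qed.

Lemma diag_block_scalar (c : K) : diag_block c%:M = c%:M.
Proof. by apply/matrixP => a b; rewrite !mxE (inj_eq block_ord_inj). Qed.

Lemma diag_block0 : diag_block 0 = 0.
Proof. by apply/matrixP => a b; rewrite !mxE. Qed.

Lemma diag_blockD (A B : 'M[K]_n) : diag_block (A + B) = diag_block A + diag_block B.
Proof. by apply/matrixP => a b; rewrite !mxE. Qed.

Lemma diag_blockZ (c : K) (A : 'M[K]_n) : diag_block (c *: A) = c *: diag_block A.
Proof. by apply/matrixP => a b; rewrite !mxE. Qed.

Lemma diag_block_word_eval m (u : 'I_m -> 'M[K]_n) w : (forall k, upper_tri (u k)) ->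
  diag_block (word_eval u w) = word_eval (fun k => diag_block (u k)) w.
Proof.
move=> hu; elim: w => [|k w IHw] /=; first exact: diag_block_scalar.
by rewrite diag_blockM ?IHw //; exact: upper_tri_word_eval.
Qed.

Lemma diag_block_nc_eval m (p : ncpoly K m) (u : 'I_m -> 'M[K]_n) :
  (forall k, upper_tri (u k)) ->
  diag_block (nc_eval p u) = nc_eval p (fun k => diag_block (u k)).
Proof.
move=> hu; rewrite /nc_eval; elim: p => [|t p IHp]; first by rewrite !big_nil diag_block0.
by rewrite !big_cons diag_blockD diag_blockZ diag_block_word_eval // IHp.
Qed.

Lemma upper_tri_diag_block (A : 'M[K]_n) : upper_tri A -> upper_tri (diag_block A).
Proof. by move=> hA a b lt_ba; rewrite mxE hA //= ltn_add2l. Qed.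

Definition embed_block (w : 'M[K]_s) : 'M[K]_n :=
  \matrix_(a, b) \sum_(c | block_ord c == a) \sum_(d | block_ord d == b) w c d.

Lemma embed_blockK : cancel embed_block diag_block.
Proof.
move=> w; apply/matrixP => a b; rewrite !mxE (big_pred1 a) => [|c].
  by rewrite (big_pred1 b) // => d; rewrite (inj_eq block_ord_inj).
by rewrite (inj_eq block_ord_inj).
Qed.

Lemma upper_tri_embed_block (w : 'M[K]_s) : upper_tri w -> upper_tri (embed_block w).
Proof.
move=> hw a b lt_ba; rewrite mxE big1 // => c /eqP ca; rewrite big1 // => d /eqP db.
by apply: hw; move: lt_ba; rewrite -ca -db /= ltn_add2l.
Qed.

Lemma diag_block_nc_eval_embed m (p : ncpoly K m) (v : 'I_m -> 'M[K]_s) :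
  (forall k, upper_tri (v k)) ->
  diag_block (nc_eval p (fun k => embed_block (v k))) = nc_eval p v.
Proof.
move=> hv; rewrite diag_block_nc_eval => [|k]; last exact: upper_tri_embed_block.
by apply: eq_nc_eval => k; rewrite embed_blockK.
Qed.

End DiagonalBlocks.

Section PolynomialIdentities.
Variables (K : fieldType) (m : nat) (p : ncpoly K m).

Lemma is_PI_T_le r s : is_PI_T p r -> (s <= r)%N -> is_PI_T p s.
Proof.
move=> PI_r le_sr v hv; have H : (0 + s <= r)%N by [].
rewrite -(diag_block_nc_eval_embed H p hv) PI_r ?diag_block0 // => k.
exact: upper_tri_embed_block.
Qed.

Lemma nc_eval_Tn_t t n (u : 'I_m -> 'M[K]_n) :
  is_PI_T p t.+1 -> (forall k, upper_tri (u k)) -> Tn_t t (nc_eval p u).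
Proof.
move=> PI_t hu; have up := upper_tri_nc_eval p hu; split=> // a b le_ba.
have [lt_ba|le_ab] := ltnP b a; first exact: up.
have H : (a + (b - a).+1 <= n)%N by rewrite addnS subnKC.
have -> : nc_eval p u a b = diag_block H (nc_eval p u) ord0 (inord (b - a)).
  rewrite mxE; congr (nc_eval p u _ _); apply/val_inj => /=.
    by rewrite addn0.
  by rewrite inordK ?subnKC.
rewrite diag_block_nc_eval // (is_PI_T_le PI_t) ?mxE // => k.
exact: upper_tri_diag_block.
Qed.

Lemma not_PI_T_witness t : is_PI_T p t.+1 -> ~ is_PI_T p t.+2 ->
  exists2 v : 'I_m -> 'M[K]_t.+2,
    forall k, upper_tri (v k) & nc_eval p v ord0 ord_max != 0.
Proof.
move=> PI_t nPI; apply: NNPP => no_witness; apply: nPI => v hv.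
apply/matrixP => a b; rewrite mxE.
have [/andP[/eqP-> /eqP->]|not_corner] := boolP ((a == ord0) && (b == ord_max)).
  by apply/eqP; apply: contraT => corner_neq0; case: no_witness; exists v.
apply: (nc_eval_Tn_t PI_t hv).2; move: not_corner; rewrite -!val_eqE /=.
by have := ltn_ord a; have := ltn_ord b; lia.
Qed.

End PolynomialIdentities.

Section RingEvaluation.
Variables (R : pzRingType) (m n : nat).

Definition word_evalR (u : 'I_m -> 'M[R]_n) (w : seq 'I_m) : 'M[R]_n :=
  foldr (fun i M => u i *m M) 1%:M w.

Definition nc_evalR (C : Type) (f : C -> R) (p : seq (C * seq 'I_m))
    (u : 'I_m -> 'M[R]_n) : 'M[R]_n :=
  \sum_(t <- p) f t.1 *: word_evalR u t.2.

End RingEvaluation.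

Lemma map_nc_evalR (C : Type) (R S : pzRingType) m n (phi : {rmorphism R -> S})
    (f : C -> R) (g : C -> S) p (u : 'I_m -> 'M[R]_n) (v : 'I_m -> 'M[S]_n) :
  (forall c, phi (f c) = g c) -> (forall k, map_mx phi (u k) = v k) ->
  map_mx phi (nc_evalR f p u) = nc_evalR g p v.
Proof.
move=> phi_f phi_u; rewrite /nc_evalR; elim: p => [|t p IHp].
  by rewrite !big_nil map_mx0.
rewrite !big_cons map_mxD map_mxZ IHp phi_f; congr (_ *: _ + _).
by elim: t.2 => [|k w IHw] /=; rewrite ?map_mx1 // map_mxM IHw phi_u.
Qed.

Definition superdiag_neq0 (K : fieldType) n r (M : 'M[K]_n) : Prop :=
  forall a b : 'I_n, b = (a + r)%N :> nat -> M a b != 0.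

Section Lines.
Variables (K : closedFieldType) (m n : nat) (p : ncpoly K m).
Implicit Types u U : 'I_m -> 'M[K]_n.

Definition mx_line u U (c : K) k := u k + c *: (U k - u k).

Lemma upper_tri_mx_line u U c k : (forall j, upper_tri (u j)) ->
  (forall j, upper_tri (U j)) -> upper_tri (mx_line u U c k).
Proof. by move=> hu hU x y lt_yx; rewrite !mxE hu ?hU // subrr mulr0 addr0. Qed.

Definition line_poly_mx u U k : 'M[{poly K}]_n :=
  map_mx polyC (u k) + 'X *: map_mx polyC (U k - u k).

Definition line_entry_poly u U a b : {poly K} :=
  nc_evalR (@polyC K) p (line_poly_mx u U) a b.

Lemma horner_line_entry_poly u U a b c :
  (line_entry_poly u U a b).[c] = nc_eval p (mx_line u U c) a b.
Proof.
have eval_c : map_mx (horner_eval c) (nc_evalR (@polyC K) p (line_poly_mx u U)) =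
    nc_evalR id p (mx_line u U c).
  apply: map_nc_evalR => [d|k]; first exact: hornerC.
  by apply/matrixP => x y; rewrite !mxE [LHS]horner_evalE hornerD hornerM hornerX !hornerC.
by rewrite -[RHS]/(nc_evalR id p _ a b) -eval_c mxE.
Qed.

Lemma nc_eval_line_neq0 u U (S : pred ('I_n * 'I_n)) :
  (forall ab, S ab -> nc_eval p u ab.1 ab.2 != 0 \/ nc_eval p U ab.1 ab.2 != 0) ->
  exists c, forall ab, S ab -> nc_eval p (mx_line u U c) ab.1 ab.2 != 0.
Proof.
move=> good_ends.
have line0 : mx_line u U 0 =1 u by move=> k; rewrite /mx_line scale0r addr0.
have line1 : mx_line u U 1 =1 U by move=> k; rewrite /mx_line scale1r addrC subrK.
have P_neq0 : \prod_(ab | S ab) line_entry_poly u U ab.1 ab.2 != 0.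
  apply/prodf_neq0 => ab /good_ends [] nz; apply: contraNneq nz => P0.
    by rewrite -(eq_nc_eval p line0) -horner_line_entry_poly P0 horner0.
  by rewrite -(eq_nc_eval p line1) -horner_line_entry_poly P0 horner0.
have [c] := closed_nonrootP _ P_neq0.
rewrite /root horner_prod => /prodf_neq0 nz; exists c => ab /nz.
by rewrite horner_line_entry_poly.
Qed.

Lemma nc_eval_superdiag_generic r (v : 'I_m -> 'M[K]_r.+1) :
  (forall k, upper_tri (v k)) -> nc_eval p v ord0 ord_max != 0 ->
  exists2 u : 'I_m -> 'M[K]_n,
    forall k, upper_tri (u k) & superdiag_neq0 r (nc_eval p u).
Proof.
(* Induction on the number i of rows already good; row i is supplied by the
   copy of v placed as the diagonal block at (i, i). *)
move=> hv v_corner.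
suff /(_ n (leqnn n)) [u hu u_sd] : forall i, (i <= n)%N ->
    exists2 u : 'I_m -> 'M[K]_n, forall k, upper_tri (u k) &
      forall a b : 'I_n, b = (a + r)%N :> nat -> (a < i)%N -> nc_eval p u a b != 0.
  by exists u => // a b /u_sd; apply.
elim=> [|i IHi] le_in.
  by exists (fun=> 0) => // k; exact: upper_tri0.
have [u hu u_sd] := IHi (ltnW le_in).
have [lt_ir|le_ri] := ltnP n (i + r.+1).
  exists u => // a b b_sd; rewrite ltnS leq_eqVlt => /predU1P[a_i|]; last exact: u_sd.
  by move: (ltn_ord b); rewrite b_sd a_i; lia.
pose U k := embed_block le_ri (v k).
have U_corner : nc_eval p U (block_ord le_ri ord0) (block_ord le_ri ord_max) != 0.
  by move: v_corner; rewrite -(diag_block_nc_eval_embed le_ri p hv) mxE.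
pose S (ab : 'I_n * 'I_n) := (ab.2 == ab.1 + r :> nat)%N && (ab.1 < i.+1)%N.
have ends_sd ab : S ab -> nc_eval p u ab.1 ab.2 != 0 \/ nc_eval p U ab.1 ab.2 != 0.
  case: ab => a b; rewrite /S /= ltnS leq_eqVlt => /andP[/eqP b_sd /predU1P[a_i|lt_ai]].
    right; suff [-> ->] : a = block_ord le_ri ord0 /\ b = block_ord le_ri ord_max by [].
    by split; apply/val_inj; rewrite /= ?b_sd a_i ?addn0.
  by left; apply: u_sd.
have [c line_sd] := nc_eval_line_neq0 ends_sd.
exists (mx_line u U c) => [k|a b b_sd lt_ai].
  by apply: upper_tri_mx_line => // j; exact: upper_tri_embed_block.
by apply: (line_sd (a, b)); rewrite /S /= b_sd eqxx.
Qed.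

End Lines.

Lemma Tn_t_lt_eq0 (K : fieldType) n t (A : 'M[K]_n) (a b : 'I_n) :
  Tn_t t A -> (b < a + t.+1)%N -> A a b = 0.
Proof. by move=> [_ A_t] lt_b; apply: A_t; lia. Qed.

Definition shift_mx (K : fieldType) n r : 'M[K]_n :=
  \matrix_(a, b) ((b == a + r :> nat)%N)%:R.

Section ShiftSimilarity.
Variables (K : fieldType) (n t : nat) (M : 'M[K]_n.+1).
Hypotheses (M_t : Tn_t t M) (M_sd : superdiag_neq0 t.+1 M).

Lemma expr_Tn_t_eq0 k (a b : 'I_n.+1) : (b < a + k * t.+1)%N -> (M ^+ k) a b = 0.
Proof.
elim: k a b => [|k IHk] a b.
  by rewrite mul0n addn0 expr0 mxE; case: eqP => [->|]; rewrite ?ltnn.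
move=> lt_b; rewrite exprSr -mulmxE mxE big1 // => c _.
have [lt_c|le_c] := ltnP c (a + k * t.+1); first by rewrite IHk ?mul0r.
by rewrite (Tn_t_lt_eq0 M_t) ?mulr0 //; move: lt_b le_c; rewrite mulSn; lia.
Qed.

Lemma expr_superdiag_neq0 k (a b : 'I_n.+1) :
  b = (a + k * t.+1)%N :> nat -> (M ^+ k) a b != 0.
Proof.
elim: k a b => [|k IHk] a b.
  by rewrite mul0n addn0 expr0 mxE => /val_inj->; rewrite eqxx oner_eq0.
move=> b_sd; rewrite exprSr -mulmxE mxE.
have lt_c : (a + k * t.+1 < n.+1)%N by move: (ltn_ord b) b_sd; rewrite mulSn; lia.
rewrite (bigD1 (Ordinal lt_c)) //= big1 ?addr0 => [|c /eqP c_neq].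
  by apply: mulf_neq0; [exact: IHk | apply: M_sd => /=; rewrite b_sd mulSn; lia].
have [lt_c'|le_c] := ltnP c (a + k * t.+1); first by rewrite expr_Tn_t_eq0 ?mul0r.
have gt_c : (a + k * t.+1 < c)%N.
  by rewrite ltn_neqAle le_c andbT; apply/eqP => eq_c; apply: c_neq; apply/val_inj/esym.
by rewrite (Tn_t_lt_eq0 M_t) ?mulr0 //; move: b_sd gt_c; rewrite mulSn; lia.
Qed.

(* Column [b] of [shift_conj_mx] is column [b + k t.+1] of [M ^+ k], for the
   largest [k] keeping that index in range; thus [M] maps each column of
   [shift_conj_mx] to the one [t.+1] places to its right. *)
Definition shift_exponent (b : nat) := ((n - b) %/ t.+1)%N.

Lemma shift_exponent_bound (b : 'I_n.+1) : (b + shift_exponent b * t.+1 < n.+1)%N.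
Proof.
rewrite ltnS /shift_exponent; have := leq_divM (n - b) t.+1; have := ltn_ord b; lia.
Qed.

Definition shift_conj_mx : 'M[K]_n.+1 :=
  \matrix_(a, b) (M ^+ shift_exponent b) a (Ordinal (shift_exponent_bound b)).

Lemma upper_tri_shift_conj_mx : upper_tri shift_conj_mx.
Proof. by move=> a b lt_ba; rewrite mxE expr_Tn_t_eq0 //= ltn_add2r. Qed.

Lemma shift_conj_mx_unit : shift_conj_mx \is a GRing.unit.
Proof.
rewrite -[shift_conj_mx]trmxK unitmxE det_tr det_trig; last first.
  by apply/is_trig_mxP => a b lt_ab; rewrite mxE upper_tri_shift_conj_mx.
by rewrite unitfE; apply/prodf_neq0 => a _; rewrite !mxE expr_superdiag_neq0.
Qed.

Lemma shift_conj_mxP : M * shift_conj_mx = shift_conj_mx * shift_mx K n.+1 t.+1.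
Proof.
apply/matrixP => a b; rewrite -!mulmxE [LHS]mxE [RHS]mxE.
have -> : \sum_j M a j * shift_conj_mx j b =
    (M ^+ (shift_exponent b).+1) a (Ordinal (shift_exponent_bound b)).
  by rewrite exprS -mulmxE mxE; apply: eq_bigr => j _; rewrite mxE.
under [RHS]eq_bigr do rewrite [shift_mx _ _ _ _ _]mxE.
have [lt_bt|le_tb] := ltnP b t.+1.
  rewrite expr_Tn_t_eq0 ?big1 //= => [c _|]; last by rewrite mulSn; lia.
  by case: eqP => [b_c|]; rewrite ?mulr0 //; move: lt_bt; rewrite b_c; lia.
have lt_c : (b - t.+1 < n.+1)%N by move: (ltn_ord b); lia.
rewrite (bigD1 (Ordinal lt_c)) //= big1 ?addr0 => [|c /eqP c_neq]; last first.
  case: eqP => [b_c|]; rewrite ?mulr0 //.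
  by case: c_neq; apply/val_inj => /=; move: b_c le_tb; lia.
rewrite !mxE /= (_ : b == b - t.+1 + t.+1 :> nat)%N ?mulr1; last by apply/eqP; lia.
have exponent_eq : shift_exponent (b - t.+1) = (shift_exponent b).+1.
  rewrite /shift_exponent (_ : n - (b - t.+1) = n - b + t.+1)%N.
    by rewrite divnDr ?dvdnn // divnn addn1.
  by move: (ltn_ord b) le_tb; lia.
congr ((M ^+ _) a _) => //; apply/val_inj => /=; rewrite exponent_eq mulSn; lia.
Qed.

End ShiftSimilarity.

Lemma Tn_t_similar (K : fieldType) n t (A M : 'M[K]_n.+1) :
  Tn_t t A -> superdiag_neq0 t.+1 A -> Tn_t t M -> superdiag_neq0 t.+1 M ->
  exists2 h : 'M[K]_n.+1, h \is a GRing.unit /\ upper_tri h & M = h * A * h^-1.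
Proof.
move=> A_t A_sd M_t M_sd.
have gA_unit := shift_conj_mx_unit A_t A_sd.
have gM_unit := shift_conj_mx_unit M_t M_sd.
set gA := shift_conj_mx t A in gA_unit *; set gM := shift_conj_mx t M in gM_unit *.
have A_shift : gA^-1 * A * gA = shift_mx K n.+1 t.+1.
  by rewrite -mulrA shift_conj_mxP // mulKr.
exists (gM * gA^-1).
  split; first by rewrite unitrMr ?unitrV.
  rewrite -mulmxE; apply: upper_triM; first exact: upper_tri_shift_conj_mx.
  exact/upper_tri_inv/upper_tri_shift_conj_mx.
rewrite invrM ?unitrV // invrK.
have -> : gM * gA^-1 * A * (gA * gM^-1) = gM * (gA^-1 * A * gA) * gM^-1.
  by rewrite !mulrA.
by rewrite A_shift -shift_conj_mxP // mulrK.
Qed.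

Section Coordinates.
Variables (K : fieldType) (n t : nat).
Local Notation d := #|coordset n t|.

Definition of_coords (y : 'I_d -> K) : 'M[K]_n :=
  \matrix_(a, b) \sum_(k | enum_val k == (a, b)) y k.

Definition superdiag_coord (k : 'I_d) : bool :=
  ((enum_val k).2 == (enum_val k).1 + t.+1 :> nat)%N.

Lemma coords_of_coords y : coords (of_coords y) =1 y.
Proof.
move=> k; rewrite /coords mxE -surjective_pairing (big_pred1 k) // => k'.
exact: (inj_eq enum_val_inj).
Qed.

Lemma Tn_t_of_coords y : Tn_t t (of_coords y).
Proof.
have off_coords (a b : 'I_n) : (b - a <= t)%N -> of_coords y a b = 0.
  move=> le_ba; rewrite mxE big_pred0 // => k; apply: contraTF (enum_valP k).
  by move=> /eqP->; rewrite inE /= -ltnNge ltnS.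
by split=> // a b lt_ba; apply: off_coords; rewrite (eqP (ltnW lt_ba)).
Qed.

Lemma superdiag_of_coords y : (forall k, superdiag_coord k -> y k != 0) ->
  superdiag_neq0 t.+1 (of_coords y).
Proof.
move=> y_sd a b b_sd; have ab_in : (a, b) \in coordset n t by rewrite inE /= b_sd addKn.
rewrite mxE (big_pred1 (enum_rank_in ab_in (a, b))) => [|k]; last first.
  by rewrite /= -(inj_eq enum_val_inj) enum_rankK_in.
by apply: y_sd; rewrite /superdiag_coord enum_rankK_in //= b_sd.
Qed.

End Coordinates.

Lemma horner_mmap_polyC (K : fieldType) d (h : 'I_d -> {poly K}) (q : {mpoly K[d]}) c :
  (mmap (@polyC K) h q).[c] = q.@[fun k => (h k).[c]].
Proof.
rewrite /mmap horner_sum mevalE; apply: eq_bigr => mm _.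
rewrite hornerCM /mmap1 horner_prod; congr (_ * _); apply: eq_bigr => i _.
by rewrite horner_exp.
Qed.

Lemma poly_eq0_cofinite (K : closedFieldType) (P : {poly K}) (s : seq K) :
  (forall c, c \notin s -> P.[c] = 0) -> P = 0.
Proof.
move=> P_off; pose Q := \prod_(a <- s) ('X - a%:P).
have Q_neq0 : Q != 0 by apply/monic_neq0/monic_prod_XsubC.
suff : P * Q == 0 by rewrite mulf_eq0 (negbTE Q_neq0) orbF => /eqP.
apply: contraT => /closed_nonrootP [c]; rewrite /root hornerM.
have [c_in|c_out] := boolP (c \in s); last by rewrite P_off ?mul0r ?eqxx.
by move: c_in; rewrite -root_prod_XsubC => /eqP->; rewrite mulr0 eqxx.
Qed.

Lemma meval_eq0_off_hyperplanes (K : closedFieldType) d (q : {mpoly K[d]})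
    (S : pred 'I_d) :
  (forall y, (forall k, S k -> y k != 0) -> q.@[y] = 0) -> forall y, q.@[y] = 0.
Proof.
move=> q_off y; pose P := mmap (@polyC K) (fun k => (y k)%:P + (S k)%:R%:P * 'X) q.
have P_eval c : P.[c] = q.@[fun k => y k + (S k)%:R * c].
  rewrite horner_mmap_polyC; apply: meval_eq => k.
  by rewrite hornerD hornerM hornerX !hornerC.
have P_eq0 : P = 0.
  apply: (@poly_eq0_cofinite _ _ [seq - y k | k <- enum 'I_d]) => c c_out.
  rewrite P_eval; apply: q_off => k Sk; rewrite Sk mul1r.
  apply: contraNneq c_out => /eqP; rewrite addrC addr_eq0 => /eqP->.
  by apply/mapP; exists k; rewrite ?mem_enum.
have := P_eval 0; rewrite P_eq0 horner0 => /esym <-.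
by apply: meval_eq => k; rewrite mulr0 addr0.
Qed.

Unset Implicit Arguments.

Theorem theorem1p5 (K : closedFieldType) (n m : nat) (p : ncpoly K m) (r : nat) :
  (2 <= n)%N -> (1 <= m)%N ->
  nc_const_coef p = 0 ->
  nc_ord_is p r ->
  (1 < r)%N -> (r < n.-1)%N ->
  (* p(T_n(K)) is contained in T_n(K)^{(r-1)} ... *)
  (forall u : 'I_m -> 'M[K]_n, (forall i, upper_tri (u i)) ->
     @Tn_t K n (r.-1) (nc_eval p u))
  /\
  (* ... and is Zariski dense there: every polynomial in the d coordinates
     vanishing on p(T_n(K)) vanishes on all of T_n(K)^{(r-1)}. *)
  (forall q : {mpoly K[#|coordset n r.-1|]},
     (forall u : 'I_m -> 'M[K]_n, (forall i, upper_tri (u i)) ->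
        q.@[@coords K n (r.-1) (nc_eval p u)] = 0) ->
     forall A : 'M[K]_n, @Tn_t K n (r.-1) A -> q.@[@coords K n (r.-1) A] = 0).
Proof.
case: n r => [|n] [|t] // _ _ _ ord_t _ _ /=.
have [PI_t nPI_t] : is_PI_T p t.+1 /\ ~ is_PI_T p t.+2 by case: ord_t => [[]|[]].
split=> [u hu|q q_image A _]; first exact: nc_eval_Tn_t.
have [v hv v_corner] := not_PI_T_witness PI_t nPI_t.
have [u0 hu0 u0_sd] := nc_eval_superdiag_generic n.+1 hv v_corner.
apply: (meval_eq0_off_hyperplanes (S := @superdiag_coord n.+1 t)) => y y_sd.
rewrite -(meval_eq _ (coords_of_coords y)).
have [h [h_unit h_up] ->] := Tn_t_similar (nc_eval_Tn_t PI_t hu0) u0_sd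
  (Tn_t_of_coords y) (superdiag_of_coords y_sd).
rewrite -nc_eval_conj // q_image // => k.
by rewrite -!mulmxE; apply: upper_triM; [apply: upper_triM | apply: upper_tri_inv].
Qed.
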